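(* Let $\varphi\in\mathcal{L}$. If there is a finite quasi-notional graded doxastic model (QNGDM) $M$ and a world $w$ of $M$ with $(M,w)\models\varphi$, then there exists a finite notional graded doxastic model (NGDM) $M''$ and a world $w''$ of $M''$ with $(M'',w'')\models\varphi$.
   Context: Fix a countably infinite set of atoms $\mathit{Atm}$ and a finite set of agents $\mathit{Agt}=\{1,\dots,n\}$; a group is a non-empty subset $J\subseteq\mathit{Agt}$, and $2^{\mathit{Agt}*}$ denotes the set of groups. $\mathbb{N}_0$ (resp. $\mathbb{N}_1$) are the naturals with (resp. without) $0$, and $\mathbb{N}_0^{\omega}=\mathbb{N}_0\cup\{\omega\}$, $\mathbb{N}_1^{\omega}=\mathbb{N}_1\cup\{\omega\}$ with $\omega$ an infinite element. A multiset over $X$ is a function $f:X\to\mathbb{N}_0^{\omega}$; its support is $\{x:f(x)>0\}$. A possibly infinite sum of grades equals the sum of its non-zero summands if there are finitely many of them and none is $\omega$, and $\omega$ otherwise. For $k\in\mathbb{N}_0$ and a group $J$, $P(J,k)$ is the set of functions $\delta:J\to\mathbb{N}_0$ with $\sum_{i\in J}\delta(i)=k$. $\mathcal{L}_0$: $\alpha::=p\mid\neg\alpha\mid\alpha\wedge\alpha\mid\triangle_i^k\alpha$ ($p\in\mathit{Atm}$, $i\in\mathit{Agt}$, $k\in\mathbb{N}_1^{\omega}$). $\mathcal{L}$: $\varphi::=\alpha\mid\neg\varphi\mid\varphi\wedge\varphi\mid\Box_J^k\varphi$ ($\alpha\in\mathcal{L}_0$, $J$ a group, $k\in\mathbb{N}_0$).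 Consider tuples $M=(W,\mathcal{D},\rho,\mathcal{V})$ with $W$ a set of worlds, $\mathcal{D}:\mathit{Agt}\times W\to$ (multisets over $\mathcal{L}_0$), $\rho:2^{\mathit{Agt}*}\times W\times W\to\mathbb{N}_0^{\omega}$, $\mathcal{V}:\mathit{Atm}\to 2^W$, with satisfaction $(M,w)\models p$ iff $w\in\mathcal{V}(p)$; Boolean clauses as usual; $(M,w)\models\triangle_i^k\alpha$ iff $\mathcal{D}(i,w)(\alpha)\ge k$; $(M,w)\models\Box_J^k\varphi$ iff for all $u\in W$ with $\rho(J,w,u)\le k$, $(M,u)\models\varphi$. Such an $M$ is an NGDM if for all groups $J$ and $w,u\in W$: $\rho(J,w,u)=\sum_{\alpha\in\mathcal{L}_0,(M,u)\not\models\alpha}\sum_{i\in J}\mathcal{D}(i,w)(\alpha)$. Such an $M$ is a QNGDM if for every group $J$ and $w,u\in W$ with $\rho(J,w,u)\ne\omega$: (i) $\rho(J,w,u)\ge\sum_{\alpha\in\mathcal{L}_0,(M,u)\not\models\alpha}\sum_{i\in J}\mathcal{D}(i,w)(\alpha)$; and (ii) there is $\delta\in P(J,\rho(J,w,u))$ with $\sum_{i\in J'}\delta(i)\ge\rho(J',w,u)$ for every non-empty $J'\subset J$. A model is finite if $W$ is finite and each $\mathcal{D}(i,w)$ has finite support. *)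

From Stdlib Require Import List.
From mathcomp Require Import all_boot.

(* Grades N_0^omega : [Some k] is the natural k, [None] is omega. *)
Definition grade := option nat.

Definition gle (x y : grade) : Prop :=
  match x, y with
  | _, None => True
  | None, Some _ => False
  | Some a, Some b => (a <= b)%N
  end.

Definition gadd (x y : grade) : grade :=
  match x, y with
  | Some a, Some b => Some (a + b)%N
  | _, _ => None
  end.

Definition pgrade := option {k : nat | (0 < k)%N}.
Definition pgrade_val (k : pgrade) : grade :=
  match k with Some k' => Some (proj1_sig k') | None => None end.

Definition group (n : nat) := {J : {set 'I_n} | J != set0}.

Inductive L0 (n : nat) : Type :=
  | L0atom : nat -> L0 n
  | L0neg : L0 n -> L0 n
  | L0and : L0 n -> L0 n -> L0 n
  | L0tri : 'I_n -> pgrade -> L0 n -> L0 n.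

Inductive L (n : nat) : Type :=
  | Lbase : L0 n -> L n
  | Lneg : L n -> L n
  | Land : L n -> L n -> L n
  | Lbox : group n -> nat -> L n -> L n.

Record model (n : nat) := Model {
  W : Type;
  D : 'I_n -> W -> L0 n -> grade;          (* multisets over L0 *)
  rho : group n -> W -> W -> grade;
  V : nat -> W -> Prop
}.
Arguments W {n} _.
Arguments D {n} _ _ _ _.
Arguments rho {n} _ _ _ _.
Arguments V {n} _ _ _.

Fixpoint sat0 {n} (M : model n) (w : W M) (a : L0 n) : Prop :=
  match a with
  | L0atom p => V M p w
  | L0neg b => ~ sat0 M w b
  | L0and b c => sat0 M w b /\ sat0 M w c
  | L0tri i k b => gle (pgrade_val k) (D M i w b)
  end.

Fixpoint sat {n} (M : model n) (w : W M) (phi : L n) : Prop :=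
  match phi with
  | Lbase a => sat0 M w a
  | Lneg psi => ~ sat M w psi
  | Land psi chi => sat M w psi /\ sat M w chi
  | Lbox J k psi => forall u : W M, gle (rho M J w u) (Some k) -> sat M u psi
  end.


Definition gsum_list (s : seq grade) : grade := foldr gadd (Some 0%N) s.

(* Possibly infinite sum of grades, as a relation [is_gsum f s]:
   s is the sum of the non-zero summands if there are finitely many of them
   and none is omega; s = omega otherwise. *)
Definition fin_sum {X : Type} (f : X -> grade) (m : nat) : Prop :=
  exists l : list X, NoDup l /\ (forall x, f x <> Some 0%N -> In x l)
                     /\ gsum_list (map f l) = Some m.

Definition is_gsum {X : Type} (f : X -> grade) (s : grade) : Prop :=
  match s with
  | Some m => fin_sum f m
  | None => ~ exists m, fin_sum f m
  end.

Definition groupD {n} (M : model n) (J : group n) (w : W M) (a : L0 n) : grade :=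
  gsum_list [seq D M i w a | i <- enum (proj1_sig J)].

Definition unsat_sum {n} (M : model n) (J : group n) (w u : W M) (s : grade) : Prop :=
  is_gsum (fun a : {a : L0 n | ~ sat0 M u a} => groupD M J w (proj1_sig a)) s.

Definition is_NGDM {n} (M : model n) : Prop :=
  forall (J : group n) (w u : W M), unsat_sum M J w u (rho M J w u).

Definition is_QNGDM {n} (M : model n) : Prop :=
  forall (J : group n) (w u : W M) (m : nat), rho M J w u = Some m ->
    (exists s, unsat_sum M J w u s /\ gle s (Some m)) /\
    (exists delta : 'I_n -> nat,
        (\sum_(i in proj1_sig J) delta i)%N = m /\
        forall J' : group n, proj1_sig J' \proper proj1_sig J ->
          gle (rho M J' w u) (Some (\sum_(i in proj1_sig J') delta i)%N)).

Definition finite_model {n} (M : model n) : Prop :=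
  (exists l : list (W M), forall w, In w l) /\
  (forall (i : 'I_n) (w : W M), exists l : list (L0 n),
      forall a, D M i w a <> Some 0%N -> In a l).

Arguments L0atom {n} _.
Arguments L0neg {n} _.
Arguments L0and {n} _ _.
Arguments L0tri {n} _ _ _.
Arguments Lbase {n} _.
Arguments Lneg {n} _.
Arguments Land {n} _ _.
Arguments Lbox {n} _ _ _.

From Stdlib Require Import List Permutation.
From HB Require Import structures.
From mathcomp Require Import all_boot boolp.

(* Fix, for each finite rho(J,x,u) of the finite QNGDM M, a split delta of it over the
   agents of J as in clause (ii).  Clause (i) for singleton groups shows that the weight
   sigma_i(x,u) that agent i puts at x on formulas false at u is at most rho({i},x,u),
   hence at most delta_i.
   The NGDM M' has as worlds the copies (u,t) of the worlds of M, tagged by a group t or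
   by nothing, and one fresh atom per world, false exactly at that world.  At y, agent i
   believes the fresh atom of (u,G) with weight delta_i - sigma_i(y,u) if i is in G and
   rho(G,y,u) is finite, and with weight omega otherwise.  Since sigma_i <= delta_i, the
   weight of the formulas false at (u,t) is then the sum over i in J of delta_i (or
   omega), which we take as rho'(J,y,(u,t)).  It equals rho(G,y,u) at (u,G) and, by
   clause (ii), dominates rho(J,y,u) everywhere, so boxes keep their truth values, as do
   formulas without fresh atoms. *)

Lemma gaddA : associative gadd.
Proof. by case=> [a|] [b|] [c|] //=; rewrite addnA. Qed.

Lemma gaddC : commutative gadd.
Proof. by case=> [a|] [b|] //=; rewrite addnC. Qed.

Lemma gadd0g : left_id (Some 0%N) gadd.
Proof. by case. Qed.

HB.instance Definition _ :=
  Monoid.isComLaw.Build grade (Some 0%N) gadd gaddA gaddC gadd0g.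

Notation "\gsum_ ( i <- r ) F" := (\big[gadd/Some 0%N]_(i <- r) F)
  (at level 41, F at level 41, i, r at level 50,
   format "'[' \gsum_ ( i <- r ) '/ ' F ']'").

Lemma gle_None (x : grade) : gle x None.
Proof. by case: x. Qed.

Lemma gle_trans {x y z : grade} : gle x y -> gle y z -> gle x z.
Proof. by case: x => [a|]; case: y => [b|]; case: z => [c|] //=; apply: leq_trans. Qed.

Definition gsub (x y : grade) : grade :=
  match x, y with Some a, Some b => Some (a - b)%N | _, _ => None end.

Lemma gsubKC (x y : grade) : gle y x -> gadd y (gsub x y) = x.
Proof. by case: x => [a|]; case: y => [b|] //= ?; rewrite subnKC. Qed.

Lemma gsum_listE {X : Type} (f : X -> grade) (l : list X) :
  gsum_list (map f l) = \gsum_(x <- l) f x.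
Proof. by elim: l => [|x l IH]; rewrite ?big_nil ?big_cons -?IH. Qed.

Lemma gsum_Some {I : Type} (r : seq I) (F : I -> nat) :
  \gsum_(i <- r) Some (F i) = Some (\sum_(i <- r) F i)%N.
Proof. by rewrite (big_morph Some (id1 := Some 0%N) (op1 := gadd) (fun _ _ => erefl)). Qed.

Lemma gsum_None {I : eqType} {r : seq I} {F : I -> grade} (i : I) :
  i \in r -> F i = None -> \gsum_(j <- r) F j = None.
Proof. by move=> ir Fi; rewrite (big_rem i ir) Fi. Qed.

Lemma eq_big_In {R : Type} {idx : R} {op : R -> R -> R} {I : Type} (r : seq I)
    (F G : I -> R) :
  (forall i, In i r -> F i = G i) ->
  \big[op/idx]_(i <- r) F i = \big[op/idx]_(i <- r) G i.
Proof.
elim: r => [|i r IH] eqFG; rewrite ?big_nil // !big_cons eqFG /= ?IH //; last by left.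
by move=> j rj; apply: eqFG; right.
Qed.

Lemma big_Permutation {R : Type} {idx : R} {op : Monoid.com_law idx} {I : Type}
    {r1 r2 : seq I} (F : I -> R) :
  Permutation r1 r2 -> \big[op/idx]_(i <- r1) F i = \big[op/idx]_(i <- r2) F i.
Proof.
elim=> [|x ? ? _ IH|x y ?|? ? ? _ IH1 _ IH2]; rewrite ?big_cons ?IH ?IH1 //.
exact: Monoid.mulmCA.
Qed.

Lemma InP {T : eqType} (x : T) (s : seq T) : reflect (In x s) (x \in s).
Proof.
elim: s => [|y s IH] /=; first by constructor.
rewrite inE; apply: (iffP orP) => [[/eqP->|/IH]|[->|/IH]]; by [left|right].
Qed.

Lemma uniq_NoDup {T : eqType} {s : seq T} : uniq s -> NoDup s.
Proof.
elim: s => [|x s IH] /=; first by constructor.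
by case/andP => /InP xs us; constructor; last exact: IH.
Qed.

Definition supp_in {X : Type} (f : X -> grade) (l : list X) : Prop :=
  forall x, f x <> Some 0%N -> In x l.

Lemma supp_in_gsum {I X : Type} (r : seq I) {F : I -> X -> grade} {l : list X} :
  (forall i, supp_in (F i) l) -> supp_in (fun x => \gsum_(i <- r) F i x) l.
Proof.
move=> suppF x nz; apply: contrapT => xl; apply: nz; apply: big1 => i _.
by case: (F i x =P Some 0%N) => // /suppF.
Qed.

Lemma gsum_supp_eq {X : Type} {f : X -> grade} {l1 l2 : list X} :
  NoDup l1 -> NoDup l2 -> supp_in f l1 -> supp_in f l2 ->
  \gsum_(x <- l1) f x = \gsum_(x <- l2) f x.
Proof.
move=> N1 N2 S1 S2; pose nz x := f x != Some 0%N.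
have rm0 l : \gsum_(x <- l) f x = \gsum_(x <- List.filter nz l) f x.
  by rewrite big_filter; symmetry; apply: big_rmcond => x /negPn/eqP.
rewrite (rm0 l1) (rm0 l2); apply/big_Permutation/NoDup_Permutation.
  1, 2: exact: NoDup_filter.
move=> x; rewrite !filter_In.
by split=> -[_ nzx]; split=> //; [apply: S2 | apply: S1]; apply/eqP.
Qed.

Lemma is_gsum_big {X : Type} (f : X -> grade) {l : list X} :
  NoDup l -> supp_in f l -> is_gsum f (\gsum_(x <- l) f x).
Proof.
move=> Nl Sl; case E: (\gsum_(x <- l) f x) => [m|] /=.
  by exists l; rewrite gsum_listE.
case=> m [l' [Nl' [Sl' E']]].
by rewrite gsum_listE (gsum_supp_eq Nl' Nl Sl' Sl) E in E'.
Qed.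

Lemma is_gsum_unique {X : Type} {f : X -> grade} {s1 s2 : grade} :
  is_gsum f s1 -> is_gsum f s2 -> s1 = s2.
Proof.
case: s1 s2 => [m1|] [m2|] //=.
- move=> [l1 [N1 [S1 <-]]] [l2 [N2 [S2 <-]]].
  by rewrite !gsum_listE (gsum_supp_eq N1 N2 S1 S2).
- by move=> fin1 []; exists m1.
- by move=> nfin fin2; case: nfin; exists m2.
Qed.

Fixpoint sig_filter {X : Type} (P : X -> Prop) (l : list X) : list {x | P x} :=
  if l is x :: l' then
    if pselect (P x) is left Px then exist P x Px :: sig_filter P l' else sig_filter P l'
  else [::].

Lemma In_sig_filter {X : Type} {P : X -> Prop} {l : list X} {x : {x | P x}} :
  In x (sig_filter P l) <-> In (sval x) l.
Proof.
case: x => x Px /=; elim: l => [|y l IH] //=.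
case: pselect => [Py|nPy] /=; rewrite IH.
  split=> [[[->]|xl]|[yx|xl]]; [by left|by right| |by right].
  by left; subst y; congr exist.
by split=> [|[yx|//]]; [right|subst y].
Qed.

Lemma NoDup_sig_filter {X : Type} (P : X -> Prop) {l : list X} :
  NoDup l -> NoDup (sig_filter P l).
Proof.
elim=> [|x r xr _ IH] /=; first by constructor.
by case: pselect => // Px; constructor=> // /In_sig_filter.
Qed.

Lemma gsum_sig_filter {X : Type} (P : X -> Prop) (g : X -> grade) (l : list X) :
  \gsum_(x <- sig_filter P l) g (sval x) =
  \gsum_(a <- l) (if `[< P a >] then g a else Some 0%N).
Proof.
elim: l => [|a l IH] /=; rewrite ?big_nil // big_cons -IH.
by case: pselect => [Pa|nPa]; case: asboolP => // _; rewrite ?big_cons ?gadd0g.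
Qed.

Lemma is_gsum_sig {X : Type} (P : X -> Prop) (g : X -> grade) {l : list X} :
  NoDup l -> supp_in g l ->
  is_gsum (fun x : {x | P x} => g (sval x))
          (\gsum_(a <- l) (if `[< P a >] then g a else Some 0%N)).
Proof.
move=> Nl Sl; rewrite -gsum_sig_filter.
apply: is_gsum_big; first exact: NoDup_sig_filter.
by move=> x /Sl /In_sig_filter.
Qed.

Section ModelSums.
Context {n : nat} (M : model n).

Definition unsat_weight (i : 'I_n) (w u : W M) (l : list (L0 n)) : grade :=
  \gsum_(a <- l) (if `[< ~ sat0 M u a >] then D M i w a else Some 0%N).

Lemma unsat_sum_weights (J : group n) (w u : W M) {l : list (L0 n)} :
  NoDup l -> (forall i, supp_in (D M i w) l) ->
  unsat_sum M J w u (\gsum_(i <- enum (sval J)) unsat_weight i w u l).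
Proof.
move=> Nl Sl; rewrite /unsat_weight exchange_big /=.
rewrite (eq_bigr (fun a => if `[< ~ sat0 M u a >] then groupD M J w a else Some 0%N)).
  apply: is_gsum_sig => // a; rewrite /groupD gsum_listE.
  exact: (supp_in_gsum (enum (sval J)) Sl a).
by move=> a _; rewrite /groupD gsum_listE; case: asboolP => // _; rewrite big1.
Qed.

End ModelSums.

Lemma supports_of_finite {n : nat} {M : model n} :
  (forall i w, exists l, supp_in (D M i w) l) ->
  {S : W M -> list (L0 n) & forall w, NoDup (S w) /\ forall i, supp_in (D M i w) (S w)}.
Proof.
move=> fin; apply: (@choice _ _ (fun w l => NoDup l /\ forall i, supp_in (D M i w) l)) => w.
have /choice [L SL] := fun i => fin i w.
exists (nodup (fun a b => pselect (a = b)) (flat_map L (enum 'I_n))).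
split=> [|i a /SL Lia]; first exact: NoDup_nodup.
by rewrite nodup_In in_flat_map; exists i; split=> //; apply/InP; rewrite mem_enum.
Qed.

Lemma list_bounded {A : Type} (f : A -> nat) (l : list A) :
  exists B, forall a, In a l -> f a < B.
Proof.
elim: l => [|a l [B IH]]; first by exists 0.
by exists (maxn (f a).+1 B) => b /= [<-|/IH fb]; rewrite leq_max ?ltnSn ?fb ?orbT.
Qed.

Fixpoint max_atom0 {n : nat} (a : L0 n) : nat :=
  match a with
  | L0atom p => p
  | L0neg b => max_atom0 b
  | L0and b c => maxn (max_atom0 b) (max_atom0 c)
  | L0tri _ _ b => max_atom0 b
  end.

Fixpoint max_atom {n : nat} (phi : L n) : nat :=
  match phi with
  | Lbase a => max_atom0 a
  | Lneg psi => max_atom psi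
  | Land psi chi => maxn (max_atom psi) (max_atom chi)
  | Lbox _ _ psi => max_atom psi
  end.

Lemma set1_neq0 {T : finType} (x : T) : [set x] != set0.
Proof. by apply/set0Pn; exists x; rewrite inE. Qed.

Section QuasiNotional.
Context {n : nat} {M : model n} (S : W M -> list (L0 n)).
Hypothesis QM : is_QNGDM M.
Hypothesis S_uniq : forall x, NoDup (S x).
Hypothesis S_supp : forall i x, supp_in (D M i x) (S x).

Definition group1 (i : 'I_n) : group n := exist _ [set i] (set1_neq0 i).

Definition sigma (i : 'I_n) (x u : W M) : grade := unsat_weight M i x u (S x).

Lemma sigma_le_rho1 i x u : gle (sigma i x u) (rho M (group1 i) x u).
Proof.
case E: (rho M (group1 i) x u) => [m|]; last exact: gle_None.
have [[s [sum_s le_s]] _] := QM _ _ _ _ E.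
have := is_gsum_unique sum_s (unsat_sum_weights M (group1 i) x u (S_uniq x) (S_supp^~ x)).
by rewrite enum_set1 big_seq1 /sigma => <-.
Qed.

Definition splits (J : group n) (x u : W M) (d : 'I_n -> nat) : Prop :=
  forall m, rho M J x u = Some m ->
    (\sum_(i in sval J) d i)%N = m /\
    forall J' : group n, sval J' \proper sval J ->
      gle (rho M J' x u) (Some (\sum_(i in sval J') d i)%N).

Lemma splits_exists J x u : exists d, splits J x u d.
Proof.
case E: (rho M J x u) => [m|]; last by exists (fun _ => 0%N) => m; rewrite E.
have [_ [d [sum_d sub_d]]] := QM _ _ _ _ E.
by exists d => m'; rewrite E => -[<-].
Qed.

Definition delta J x u : 'I_n -> nat := projT1 (cid (splits_exists J x u)).

Lemma delta_sum {J x u m} :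
  rho M J x u = Some m -> (\sum_(i in sval J) delta J x u i)%N = m.
Proof. by move=> E; have [] := projT2 (cid (splits_exists J x u)) m E. Qed.

Lemma delta_proper {J x u m} (J' : group n) :
  rho M J x u = Some m -> sval J' \proper sval J ->
  gle (rho M J' x u) (Some (\sum_(i in sval J') delta J x u i)%N).
Proof. by move=> E; have [_] := projT2 (cid (splits_exists J x u)) m E; apply. Qed.

Lemma rho1_le_delta {J x u m} i :
  rho M J x u = Some m -> i \in sval J -> gle (rho M (group1 i) x u) (Some (delta J x u i)).
Proof.
move=> E iJ; have [/eqP Ji|nJi] := boolP (sval J == [set i]).
  have -> : group1 i = J by apply: val_inj; rewrite /= Ji.
  by rewrite E -(delta_sum E) Ji big_set1 /=.
have := delta_proper (group1 i) E; rewrite big_set1; apply.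
by rewrite properEneq eq_sym nJi sub1set iJ.
Qed.

Lemma sigma_le_delta {J x u m} i :
  rho M J x u = Some m -> i \in sval J -> gle (sigma i x u) (Some (delta J x u i)).
Proof. by move=> E iJ; apply: gle_trans (sigma_le_rho1 i x u) (rho1_le_delta i E iJ). Qed.

Variables (lw : list (W M)) (w0 : W M) (B : nat).
Hypothesis lw_full : forall x, In x lw.
Hypothesis S_bound : forall x a, In a (S x) -> max_atom0 a < B.

Definition W' : Type := 'I_(size lw) * option (group n).

Definition orig (y : W') : W M := List.nth y.1 lw w0.

Lemma orig_onto (x : W M) (t : option (group n)) : exists y : W', orig y = x /\ y.2 = t.
Proof.
have [j [jlw jx]] := In_nth lw x w0 (lw_full x).
by exists (Ordinal (introT ltP jlw), t).
Qed.

Definition atom_of (z : W') : nat := B + enum_rank z.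

Definition fresh (p : nat) : option W' := [pick z | atom_of z == p].

Lemma fresh_atom z : fresh (atom_of z) = Some z.
Proof.
rewrite /fresh; case: pickP => [z' /eqP/addnI/val_inj/enum_rank_inj -> //|/(_ z)].
by rewrite eqxx.
Qed.

Lemma fresh_below p : p < B -> fresh p = None.
Proof.
rewrite /fresh => pB; case: pickP => // z /eqP zp.
by move: pB; rewrite -zp ltnNge leq_addr.
Qed.

Lemma fresh_Some {p z} : fresh p = Some z -> p = atom_of z.
Proof. by rewrite /fresh; case: pickP => // z' /eqP <- [->]. Qed.

Definition demand (i : 'I_n) (y z : W') : grade :=
  if z.2 is Some G then
    if (i \in sval G) && isSome (rho M G (orig y) (orig z))
    then Some (delta G (orig y) (orig z) i) else None
  else None.

Definition D' (i : 'I_n) (y : W') (a : L0 n) : grade :=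
  if a is L0atom p then
    if fresh p is Some z then gsub (demand i y z) (sigma i (orig y) (orig z))
    else D M i (orig y) a
  else D M i (orig y) a.

Definition V' (p : nat) (y : W') : Prop :=
  if fresh p is Some z then y != z else V M p (orig y).

Definition rho' (G : group n) (y z : W') : grade := \gsum_(i <- enum (sval G)) demand i y z.

Definition M' : model n := @Model n W' D' rho' V'.

Lemma D'_old i y a : max_atom0 a < B -> D' i y a = D M i (orig y) a.
Proof. by case: a => //= p /fresh_below ->. Qed.

Lemma D'_fresh i y z :
  D M' i y (L0atom (atom_of z)) = gsub (demand i y z) (sigma i (orig y) (orig z)).
Proof. by rewrite /= fresh_atom. Qed.

Lemma sat0_M' {a} : max_atom0 a < B -> forall y, sat0 M' y a <-> sat0 M (orig y) a.
Proof.
elim: a => [p|b IH|b IHb c IHc|i k b IH] /= bound y.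
- by rewrite /V' fresh_below.
- by rewrite IH.
- by move: bound; rewrite gtn_max => /andP [bb bc]; rewrite IHb // IHc.
- by rewrite D'_old.
Qed.

Lemma sat0_fresh y z : sat0 M' y (L0atom (atom_of z)) = (y != z).
Proof. by rewrite /= /V' fresh_atom. Qed.

Lemma sigma_le_demand i y z : gle (sigma i (orig y) (orig z)) (demand i y z).
Proof.
rewrite /demand; case: z.2 => [G|]; last exact: gle_None.
case: ifP => [/andP [iG]|_]; last exact: gle_None.
case E: (rho M G (orig y) (orig z)) => [m|] // _.
exact: sigma_le_delta E iG.
Qed.

Definition S' (y : W') : list (L0 n) :=
  S (orig y) ++ [seq L0atom (atom_of z) | z <- enum {: W'}].

Lemma S'_uniq y : NoDup (S' y).
Proof.
apply: NoDup_app; first exact: S_uniq.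
  apply: FinFun.Injective_map_NoDup; last exact/uniq_NoDup/enum_uniq.
  by move=> z z' [/addnI/val_inj/enum_rank_inj].
move=> a /S_bound aB /in_map_iff [z [za _]].
by move: aB; rewrite -za /= ltnNge leq_addr.
Qed.

Lemma S'_supp i y : supp_in (D' i y) (S' y).
Proof.
move=> a; have old : D M i (orig y) a <> Some 0%N -> In a (S' y).
  by move=> /S_supp Sa; apply/in_or_app; left.
case: a old => [p|||] old //=; case E: (fresh p) => [z|] // _.
rewrite (fresh_Some E); apply/in_or_app; right.
by apply: in_map; apply/InP; rewrite mem_enum.
Qed.

Lemma unsat_weight_M' i y z : unsat_weight M' i y z (S' y) = demand i y z.
Proof.
rewrite /unsat_weight big_cat big_map.
have -> : \gsum_(a <- S (orig y))
    (if `[< ~ sat0 M' z a >] then D' i y a else Some 0%N) = sigma i (orig y) (orig z).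
  apply: eq_big_In => a /S_bound aB.
  by rewrite D'_old // (propext (sat0_M' aB z)).
rewrite (bigD1_seq z) ?mem_enum ?enum_uniq // big1 => [|z' z'z].
  rewrite sat0_fresh eqxx asboolT // Monoid.mulm1 D'_fresh.
  exact/gsubKC/sigma_le_demand.
by rewrite sat0_fresh asbool_neg asboolb negbK eq_sym (negbTE z'z).
Qed.

Lemma M'_NGDM : is_NGDM M'.
Proof.
move=> G y z; have := unsat_sum_weights M' G y z (S'_uniq y) (S'_supp^~ y).
by rewrite (eq_bigr _ (fun i _ => unsat_weight_M' i y z)).
Qed.

Lemma M'_finite : finite_model M'.
Proof.
split; first by exists (enum {: W'}) => y; apply/InP; rewrite mem_enum.
by move=> i y; exists (S' y); apply: S'_supp.
Qed.

Lemma rho'_None {G : group n} {y z : W'} {i : 'I_n} :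
  i \in sval G -> demand i y z = None -> rho' G y z = None.
Proof. by move=> iG; apply: (gsum_None i); rewrite mem_enum. Qed.

Lemma rho'_subset {G H : group n} {y z : W'} {m : nat} :
  z.2 = Some H -> rho M H (orig y) (orig z) = Some m -> sval G \subset sval H ->
  rho' G y z = Some (\sum_(i in sval G) delta H (orig y) (orig z) i)%N.
Proof.
move=> zH E GH; rewrite -big_enum -gsum_Some; apply: eq_big_seq => i.
by rewrite mem_enum /demand zH E andbT => /(subsetP GH) ->.
Qed.

Lemma rho'_tagged {G : group n} {y z : W'} {m : nat} :
  z.2 = Some G -> rho M G (orig y) (orig z) = Some m -> rho' G y z = Some m.
Proof. by move=> zG E; rewrite (rho'_subset zG E (subxx _)) (delta_sum E). Qed.

Lemma rho_le_rho' G y z : gle (rho M G (orig y) (orig z)) (rho' G y z).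
Proof.
have none i : i \in sval G -> demand i y z = None ->
    gle (rho M G (orig y) (orig z)) (rho' G y z).
  by move=> iG /(rho'_None iG) ->; apply: gle_None.
have [i0 i0G] := set0Pn _ (proj2_sig G).
case zH: z.2 => [H|]; last by apply: (none i0); rewrite // /demand zH.
case E: (rho M H (orig y) (orig z)) => [m|]; last first.
  by apply: (none i0); rewrite // /demand zH E andbF.
have [GH|/subsetPn [i iG niH]] := boolP (sval G \subset sval H); last first.
  by apply: (none i); rewrite // /demand zH (negbTE niH).
rewrite (rho'_subset zH E GH); have [/eqP GeqH|GneH] := boolP (sval G == sval H).
  have -> : G = H by apply: val_inj.
  by rewrite E (delta_sum E) /=.
by apply: delta_proper E _; rewrite properEneq GneH.
Qed.

Lemma sat_M' {phi} : max_atom phi < B -> forall y, sat M' y phi <-> sat M (orig y) phi.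
Proof.
elim: phi => [a|psi IH|psi IHp chi IHc|G k psi IH] /= bound y.
- exact: sat0_M'.
- by rewrite IH.
- by move: bound; rewrite gtn_max => /andP [bp bc]; rewrite IHp // IHc.
- split=> [box u | box z le_z].
    case E: (rho M G (orig y) u) => [m|] //= le_m.
    have [z [zu zG]] := orig_onto u (Some G); subst u.
    by apply/IH => //; apply: box; rewrite (rho'_tagged zG E).
  by apply/IH => //; apply: box; apply: gle_trans (rho_le_rho' G y z) le_z.
Qed.

End QuasiNotional.

Theorem lemma2 (n : nat) (phi : L n) :
  (exists (M : model n) (w : W M), finite_model M /\ is_QNGDM M /\ sat M w phi) ->
  exists (M'' : model n) (w'' : W M''), finite_model M'' /\ is_NGDM M'' /\ sat M'' w'' phi.
Proof.
move=> [M [w [[[lw lw_full] fin_supp] [QM sat_w]]]].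
have [S S_ok] := supports_of_finite fin_supp.
have S_uniq x : NoDup (S x) := (S_ok x).1.
have S_supp i x : supp_in (D M i x) (S x) := (S_ok x).2 i.
have [B0 B0_bound] := list_bounded max_atom0 (flat_map S lw).
pose B := maxn B0 (max_atom phi).+1.
have S_bound x a : In a (S x) -> max_atom0 a < B.
  by move=> Sa; rewrite leq_max B0_bound //; apply/in_flat_map; exists x.
have phi_bound : max_atom phi < B by rewrite leq_max ltnSn orbT.
have [y [yw _]] := orig_onto lw w lw_full w None.
exists (M' S QM lw w B), y; split; first by apply: M'_finite.
split; first by apply: M'_NGDM.
by apply/(sat_M' S QM lw w B lw_full phi_bound); rewrite yw.
Qed.
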